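(* Let $B, G, T \ge 1$ (with $G \ge 2$), and consider a policy $\pi_\theta$ and old policy $\pi_{\mathrm{old}}$. Prompts $q^{(1)},\dots,q^{(B)}$ are sampled independently from a distribution $P_Q$; for each prompt $q^{(b)}$, $G$ completions $o^{(b)}_1,\dots,o^{(b)}_G$ of $T$ tokens are generated from $\pi_{\mathrm{old}}$ and assigned rewards $r^{(b)}_i$. For completion $i$ of prompt $b$ and token $t$ let $\pi_t(\theta) := \pi_\theta(o^{(b)}_{i,t}\mid q^{(b)}, o^{(b)}_{i,1:t-1})/\pi_{\mathrm{old}}(o^{(b)}_{i,t}\mid q^{(b)}, o^{(b)}_{i,1:t-1})$, let $X_i^{(b)} := \frac{1}{T}\sum_{t=1}^T \pi_t(\theta)\nabla_\theta\log\pi_t(\theta)$, and let \[ \mathcal J_1(\theta) := \frac{1}{B}\sum_{b=1}^B \frac{1}{G}\sum_{i=1}^G \frac{1}{T}\sum_{t=1}^T \pi_t(\theta)\hat A_i^{(b)}, \] so that $\nabla_\theta \mathcal J_1(\theta) = \frac{1}{B}\sum_{b=1}^B\frac{1}{G}\sum_{i=1}^G \hat A_i^{(b)} X_i^{(b)}$, where $\hat A_i^{(b)}$ is a per-completion advantage. Assume $\|X_i^{(b)}\| \le C$ for all $i,b$. Then: (1) If $\hat A_i^{(b)}$ is the rank advantage $\hat A_i^{(b)} = 2 - (\rho_b(i)-1)\cdot\frac{4}{G-1}$, where $\rho_b$ is a bijection of $\{1,\dots,G\}$ ranking the completions of prompt $b$ by reward (highest reward gets rank $1$), then $\|\nabla_\theta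 \mathcal J_1(\theta)\| \le 2C$ almost surely. (2) If $\hat A_i^{(b)}$ is the standardized advantage $\hat A_i^{(b)} = (r_i^{(b)} - \mathrm{mean}(r_1^{(b)},\dots,r_G^{(b)}))/\mathrm{std}(r_1^{(b)},\dots,r_G^{(b)})$ and these standardized advantages are sub-Gaussian with $\psi_2$-norms bounded by a constant not depending on $i$, $b$, $G$, then $\|\nabla_\theta\mathcal J_1(\theta)\| = O_p(\sqrt{\log G})$ as $B, G \to \infty$.
   Context: $\|\cdot\|_{\psi_2}$ denotes the sub-Gaussian (Orlicz) norm. $O_p(a_n)$ denotes stochastic boundedness: the quantity divided by $a_n$ is bounded in probability. The constant $C$ may depend on $T$. *)

From HB Require Import structures.
From mathcomp Require Import all_boot all_order all_fingroup all_algebra.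
From mathcomp Require Import all_classical all_reals all_analysis.
Set Implicit Arguments. Unset Strict Implicit. Unset Printing Implicit Defensive.
Import Order.TTheory GRing.Theory Num.Theory.
Import numFieldNormedType.Exports.
Local Open Scope classical_set_scope.
Local Open Scope ring_scope.

Section Defs.
Variable R : realType.

Definition grp_mean (G : nat) (r : 'I_G -> R) : R :=
  (\sum_(i < G) r i) / G%:R.

Definition grp_std (G : nat) (r : 'I_G -> R) : R :=
  Num.sqrt ((\sum_(i < G) (r i - grp_mean r) ^+ 2) / G%:R).

Definition std_adv (G : nat) (r : 'I_G -> R) (i : 'I_G) : R :=
  (r i - grp_mean r) / grp_std r.

(* rank advantage 2 - (rho(i) - 1) * 4/(G-1); ranks are stored 0-based in
   'I_G, i.e. the paper's rank rho(i) in {1..G} is (val (rho i)).+1 *)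
Definition rank_adv (G : nat) (rho : {perm 'I_G}) (i : 'I_G) : R :=
  2 - (val (rho i))%:R * (4 / (G.-1)%:R).

Definition ranks_by_reward (G : nat) (r : 'I_G -> R) (rho : {perm 'I_G}) :=
  forall i j : 'I_G, r j < r i -> (val (rho i) < val (rho j))%N.

Variable V : normedModType R.

Definition tok_avg (T : nat) (ratio : 'I_T -> R) (gradlog : 'I_T -> V) : V :=
  (T%:R)^-1 *: \sum_(t < T) (ratio t *: gradlog t).

Definition grad_J1 (B G T : nat) (A : 'I_B -> 'I_G -> R)
  (ratio : 'I_B -> 'I_G -> 'I_T -> R) (gradlog : 'I_B -> 'I_G -> 'I_T -> V) : V :=
  (B%:R)^-1 *: \sum_(b < B) ((G%:R)^-1 *:
     \sum_(i < G) (A b i *: tok_avg (ratio b i) (gradlog b i))).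
End Defs.

(* sub-Gaussian (Orlicz psi_2) norm:
   ||Y||_psi2 = inf { t > 0 : E[exp(Y^2/t^2)] <= 2 }  (in \bar R, +oo if empty) *)
Definition psi2_norm (R : realType) (d : measure_display) (Omega : measurableType d)
  (P : probability Omega R) (Y : Omega -> R) : \bar R :=
  ereal_inf [set x : \bar R | exists t : R, (0 < t)%R /\
     (\int[P]_w (expR (Y w ^+ 2 / t ^+ 2))%:E <= 2%:E)%E /\ x = t%:E].
Arguments rank_adv {R G} rho i.

From HB Require Import structures.
From mathcomp Require Import all_boot all_order all_fingroup all_algebra.
From mathcomp Require Import all_classical all_reals all_analysis.
From mathcomp Require Import lra.
Set Implicit Arguments. Unset Strict Implicit. Unset Printing Implicit Defensive.
Import Order.TTheory GRing.Theory Num.Theory.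
Import numFieldNormedType.Exports.
Local Open Scope classical_set_scope.
Local Open Scope ring_scope.

(* The gradient is an average of the vectors A_i^(b) X_i^(b), so by the
   triangle inequality its norm is at most C times the largest per-prompt
   average of |A_i^(b)|.  Rank advantages lie in [-2, 2].  Standardized
   advantages have mean square 1 (or vanish when std = 0), hence mean
   absolute value at most 1.  Both bounds are deterministic; in the
   standardized case the bound C is already O(sqrt(log G)). *)

Section GradientBound.
Variables (R : realType) (V : normedModType R) (B G T : nat).
Variables (ratio : 'I_B -> 'I_G -> 'I_T -> R) (gradlog : 'I_B -> 'I_G -> 'I_T -> V).
Variable C : R.
Hypothesis tok_avg_le : forall b i, `| tok_avg (ratio b i) (gradlog b i) | <= C.

Lemma norm_grad_J1_le (A : 'I_B -> 'I_G -> R) (K : R) :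
  (0 < B)%N -> (0 < G)%N ->
  (forall b, \sum_(i < G) `|A b i| <= G%:R * K) ->
  `| grad_J1 A ratio gradlog | <= K * C.
Proof.
move=> B0 G0 sumA_le.
have C0 : 0 <= C.
  exact: le_trans (normr_ge0 _) (tok_avg_le (Ordinal B0) (Ordinal G0)).
have Bpos : (0 : R) < B%:R by rewrite ltr0n.
have Gpos : (0 : R) < G%:R by rewrite ltr0n.
rewrite /grad_J1 normrZ ger0_norm ?invr_ge0 ?ler0n // ler_pdivrMl //.
apply: le_trans (ler_norm_sum _ _ _) _.
have -> : B%:R * (K * C) = \sum_(b < B) (K * C).
  by rewrite sumr_const card_ord mulr_natl.
apply: ler_sum => b _.
rewrite normrZ ger0_norm ?invr_ge0 ?ler0n // ler_pdivrMl //.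
apply: le_trans (ler_norm_sum _ _ _) _.
apply: (@le_trans _ _ (\sum_(i < G) `|A b i| * C)).
  by apply: ler_sum => i _; rewrite normrZ ler_wpM2l.
by rewrite -mulr_suml mulrA ler_wpM2r.
Qed.

End GradientBound.

Lemma norm_rank_adv_le (R : realType) (G : nat) (rho : {perm 'I_G}) (i : 'I_G) :
  (2 <= G)%N -> `|rank_adv (R:=R) rho i| <= 2.
Proof.
move=> G2.
have G1pos : (0 : R) < (G.-1)%:R by rewrite ltr0n -ltnS prednK // ltnW.
have rank_le : ((val (rho i))%:R : R) <= (G.-1)%:R.
  by rewrite ler_nat -ltnS prednK ?ltn_ord // ltnW.
set k := (val (rho i))%:R in rank_le *.
have step_ge0 : 0 <= k * (4 / (G.-1)%:R) by rewrite mulr_ge0 ?divr_ge0 ?ler0n ?ltW.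
have step_le4 : k * (4 / (G.-1)%:R) <= 4.
  by rewrite mulrA ler_pdivrMr // mulrC ler_wpM2l.
rewrite /rank_adv ler_norml; apply/andP; split; lra.
Qed.

Lemma sum_sqr_std_adv_le (R : realType) (G : nat) (r : 'I_G -> R) :
  (0 < G)%N -> \sum_(i < G) std_adv r i ^+ 2 <= G%:R.
Proof.
move=> G0.
have Gpos : (0 : R) < G%:R by rewrite ltr0n.
rewrite /std_adv /grp_std.
under eq_bigr => i _ do rewrite expr_div_n.
rewrite -mulr_suml.
set S := \sum_(i < G) _.
have S0 : 0 <= S by apply: sumr_ge0 => i _; apply: sqr_ge0.
rewrite sqr_sqrtr ?divr_ge0 ?ler0n //.
have [->|S_neq0] := eqVneq S 0; first by rewrite mul0r ler0n.
by rewrite invf_div mulrA (mulrC S) mulrK ?unitfE.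
Qed.

Lemma normr_le_half_1_plus_sqr (R : realType) (a : R) : `|a| <= (1 + a ^+ 2) / 2.
Proof.
rewrite ler_pdivlMr //; case: (lerP 0 a) => a_sign.
  by rewrite ger0_norm //; have := sqr_ge0 (a - 1); lra.
by rewrite ltr0_norm //; have := sqr_ge0 (a + 1); lra.
Qed.

Lemma sum_norm_std_adv_le (R : realType) (G : nat) (r : 'I_G -> R) :
  (0 < G)%N -> \sum_(i < G) `|std_adv r i| <= G%:R.
Proof.
move=> G0.
apply: (@le_trans _ _ (\sum_(i < G) ((1 + std_adv r i ^+ 2) / 2))).
  by apply: ler_sum => i _; apply: normr_le_half_1_plus_sqr.
rewrite -mulr_suml big_split /= sumr_const card_ord.
have := sum_sqr_std_adv_le r G0; lra.
Qed.

Lemma sqrt_ln_ge_sqrt_ln2 (R : realType) (G : nat) :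
  (2 <= G)%N -> Num.sqrt (ln 2%:R) <= Num.sqrt (ln (G%:R : R)).
Proof.
move=> G2.
by rewrite ler_sqrt ?ln_ge0 ?ler1n ?(ltnW G2) // ler_ln ?posrE ?ltr0n ?ler_nat // ltnW.
Qed.

Theorem theoremD1 (R : realType) (V : normedModType R)
  (d : measure_display) (Omega : measurableType d) (P : probability Omega R)
  (T : nat) (C : R) :
  (0 < T)%N ->
  (* (1) rank advantage: bound 2C almost surely *)
  (forall (B G : nat) (r : 'I_B -> 'I_G -> Omega -> R)
     (ratio : 'I_B -> 'I_G -> 'I_T -> Omega -> R)
     (gradlog : 'I_B -> 'I_G -> 'I_T -> Omega -> V)
     (rho : 'I_B -> Omega -> {perm 'I_G}),
     (0 < B)%N -> (2 <= G)%N ->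
     (forall b i, measurable_fun setT (r b i)) ->
     (forall b w, ranks_by_reward (fun i => r b i w) (rho b w)) ->
     (forall b i w, `| tok_avg (fun t => ratio b i t w) (fun t => gradlog b i t w) | <= C) ->
     {ae P, forall w,
        `| grad_J1 (fun b i => rank_adv (rho b w) i)
                   (fun b i t => ratio b i t w) (fun b i t => gradlog b i t w) |
        <= 2 * C})
  /\
  (* (2) standardized advantage: O_p(sqrt(log G)) as B, G -> oo *)
  (forall (r : forall B G : nat, 'I_B -> 'I_G -> Omega -> R)
     (ratio : forall B G : nat, 'I_B -> 'I_G -> 'I_T -> Omega -> R)
     (gradlog : forall B G : nat, 'I_B -> 'I_G -> 'I_T -> Omega -> V),
     (forall B G (b : 'I_B) (i : 'I_G), measurable_fun setT (r B G b i)) ->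
     (forall B G b i w, (0 < B)%N -> (2 <= G)%N ->
        `| tok_avg (fun t => ratio B G b i t w) (fun t => gradlog B G b i t w) | <= C) ->
     (exists K : R, forall B G (b : 'I_B) (i : 'I_G), (0 < B)%N -> (2 <= G)%N ->
        (psi2_norm P (fun w => std_adv (fun j => r B G b j w) i) <= K%:E)%E) ->
     forall eps : R, 0 < eps ->
     exists M : R, exists N : nat, forall B G : nat, (N <= B)%N -> (N <= G)%N ->
       (P [set w | (M * Num.sqrt (ln G%:R) <
          `| grad_J1 (fun b i => std_adv (fun j => r B G b j w) i)
                     (fun b i t => ratio B G b i t w) (fun b i t => gradlog B G b i t w) |)%R]
        <= eps%:E)%E).
Proof.
move=> _; split.
  move=> B G r ratio gradlog rho B0 G2 _ _ tok_avg_le; apply: aeW => w.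
  apply: norm_grad_J1_le => //; first exact: ltnW.
  move=> b; have -> : G%:R * 2 = \sum_(i < G) (2 : R).
    by rewrite sumr_const card_ord mulr_natl.
  by apply: ler_sum => i _; apply: norm_rank_adv_le.
move=> r ratio gradlog _ tok_avg_le _ eps eps0.
have sqrt_ln2_pos : (0 : R) < Num.sqrt (ln 2%:R) by rewrite sqrtr_gt0 ln_gt0 ?ltr1n.
exists (`|C| / Num.sqrt (ln 2%:R)), 2%N => B G B2 G2.
suff -> : [set w | `|C| / Num.sqrt (ln 2%:R) * Num.sqrt (ln G%:R) <
          `| grad_J1 (fun b i => std_adv (fun j => r B G b j w) i)
                     (fun b i t => ratio B G b i t w) (fun b i t => gradlog B G b i t w) |] = set0.
  by rewrite measure0 lee_fin ltW.
apply/seteqP; split => // w /=; apply/negP; rewrite -leNgt.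
have grad_le_C : `| grad_J1 (fun b i => std_adv (fun j => r B G b j w) i)
    (fun b i t => ratio B G b i t w) (fun b i t => gradlog B G b i t w) | <= C.
  rewrite -[C]mul1r; apply: norm_grad_J1_le; rewrite ?(ltnW B2) ?(ltnW G2) //.
    by move=> b i; apply: tok_avg_le; rewrite ?(ltnW B2).
  by move=> b; rewrite mulr1 sum_norm_std_adv_le // ltnW.
apply: (le_trans grad_le_C); apply: (le_trans (ler_norm C)).
by rewrite mulrAC ler_pdivlMr // ler_wpM2l ?sqrt_ln_ge_sqrt_ln2.
Qed.
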